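(* Let $f:\mathbf U\to\mathbf V$ be a map in the set-up, with the layered decomposition $\mathcal D(f)=\bigcup_k\mathcal D_k(f)$ of equivalence classes of critical points described in the context. Then for every $k\ge1$, every $[c]\in\mathcal D_k(f)$ accumulates to some element of $\mathcal D_0(f)$.
   Context: A map in the set-up: $\mathbf V$ is a disjoint union of finitely many Jordan domains in $\mathbb C$ with pairwise disjoint quasicircle boundaries; $\mathbf U$ is compactly contained in $\mathbf V$ and is a union of finitely many Jordan domains with pairwise disjoint closures; $f:\mathbf U\to\mathbf V$ is a proper holomorphic map all of whose critical points (set $\mathrm{Crit}(f)$) lie in $\mathcal K_f:=\{z\in\mathbf U: f^n(z)\in\mathbf U\ \forall n\ge0\}$, and each component of $\mathbf V$ contains at most one component of $\mathcal K_f$ containing critical points. Puzzle pieces of depth $n$ are components of $f^{-n}(\mathbf V)$; $P_n(x)$ is the depth-$n$ piece containing $x\in\mathcal K_f$. For $x,y\in\mathcal K_f$, $x\to y$ means: for every $n\ge0$ there is $j\ge1$ with $f^j(x)\in P_n(y)$. On $\mathrm{Crit}(f)$: $c_1\sim c_2$ iff $c_1=c_2$ or ($c_1\to c_2$ and $c_2\to c_1$); $\mathcal D(f)=\mathrm{Crit}(f)/\sim$. $[c_1]\to[c_2]$ iff there exist $c_1'\in[c_1]$, $c_2'\in[c_2]$ with $c_1'\to c_2'$. Partial order: $[c_1]\le[c_2]$ iff $[c_1]=[c_2]$ or $[c_2]\to[c_1]$. $\mathcal D_0(f)$ is the set of $[c]$ that do not accumulate to any element of $\mathcal D(f)\setminus\{[c]\}$;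 inductively $\mathcal D_{k+1}(f)$ is the set of $\le$-minimal elements of $\mathcal D(f)\setminus(\mathcal D_0(f)\cup\dots\cup\mathcal D_k(f))$. *)

(* The complex plane is Coquelicot's [C];
   complex differentiability is Coquelicot's [is_derive]/[ex_derive] over the
   absolute-value ring [C_AbsRing] (so it is genuine C-differentiability). *)
From Stdlib Require Import Reals List.
From Coquelicot Require Import Coquelicot.
Open Scope R_scope.

Definition subset (A B : C -> Prop) : Prop := forall z, A z -> B z.

Definition connected (S : C -> Prop) : Prop :=
  forall O1 O2 : C -> Prop, open O1 -> open O2 ->
    (forall z, S z -> O1 z \/ O2 z) ->
    (exists z, S z /\ O1 z) -> (exists z, S z /\ O2 z) ->
    exists z, S z /\ O1 z /\ O2 z.

(* [component A x] is the connected component of A containing x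
   (empty if x is not in A) *)
Definition component (A : C -> Prop) (x : C) : C -> Prop :=
  fun y => exists S : C -> Prop, subset S A /\ connected S /\ S x /\ S y.

Definition closure (S : C -> Prop) : C -> Prop :=
  fun z => forall eps, 0 < eps -> exists w, S w /\ Cmod (w - z) < eps.

Definition bounded (S : C -> Prop) : Prop :=
  exists M, forall z, S z -> Cmod z <= M.

Definition compact (K : C -> Prop) : Prop :=
  forall (I : Type) (O : I -> C -> Prop),
    (forall i, open (O i)) -> (forall z, K z -> exists i, O i z) ->
    exists l : list I, forall z, K z -> exists i, In i l /\ O i z.

Definition compactly_contained (A B : C -> Prop) : Prop :=
  compact (closure A) /\ subset (closure A) B.

Definition jordan_curve (g : R -> C) : Prop :=
  (forall t, continuous g t) /\ (forall t, g (t + 1) = g t) /\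
  (forall s t, 0 <= s < 1 -> 0 <= t < 1 -> g s = g t -> s = t).

Definition curve (g : R -> C) : C -> Prop :=
  fun w => exists t, 0 <= t <= 1 /\ g t = w.

Definition jordan_domain_of (g : R -> C) (D : C -> Prop) : Prop :=
  exists z0, ~ curve g z0 /\
    (forall z, D z <-> component (fun w => ~ curve g w) z0 z) /\ bounded D.

(* quasiconformal homeomorphism of the plane (metric definition):
   a homeomorphism phi with  limsup_{r->0} L(z,r)/l(z,r) <= H  uniformly in z *)
Definition quasiconformal (phi : C -> C) : Prop :=
  (forall z, continuous phi z) /\
  (exists psi : C -> C, (forall w, continuous psi w) /\
     (forall z, psi (phi z) = z) /\ (forall w, phi (psi w) = w)) /\
  exists H : R, forall z, exists r0, 0 < r0 /\
    forall r w1 w2, 0 < r < r0 -> Cmod (w1 - z) = r -> Cmod (w2 - z) = r ->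
      Cmod (phi w1 - phi z) <= H * Cmod (phi w2 - phi z).

Definition quasicircle (G : C -> Prop) : Prop :=
  exists phi, quasiconformal phi /\
    forall w, G w <-> exists z, Cmod z = 1 /\ phi z = w.

Definition setup_V (V : C -> Prop) : Prop :=
  exists (n : nat) (g : nat -> R -> C) (D : nat -> C -> Prop),
    (forall i, (i < n)%nat ->
       jordan_curve (g i) /\ jordan_domain_of (g i) (D i) /\
       quasicircle (curve (g i))) /\
    (forall i j, (i < n)%nat -> (j < n)%nat -> i <> j ->
       (forall z, ~ (curve (g i) z /\ curve (g j) z)) /\
       (forall z, ~ (D i z /\ D j z))) /\
    (forall z, V z <-> exists i, (i < n)%nat /\ D i z).

Definition setup_U (U V : C -> Prop) : Prop :=
  compactly_contained U V /\
  exists (n : nat) (g : nat -> R -> C) (D : nat -> C -> Prop),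
    (forall i, (i < n)%nat -> jordan_curve (g i) /\ jordan_domain_of (g i) (D i)) /\
    (forall i j, (i < n)%nat -> (j < n)%nat -> i <> j ->
       forall z, ~ (closure (D i) z /\ closure (D j) z)) /\
    (forall z, U z <-> exists i, (i < n)%nat /\ D i z).

Definition proper_holomorphic (U V : C -> Prop) (f : C -> C) : Prop :=
  open U /\
  (forall z, U z -> ex_derive (K := C_AbsRing) (V := C_NormedModule) f z) /\
  (forall z, U z -> V (f z)) /\
  (forall K, compact K -> subset K V -> compact (fun z => U z /\ K (f z))).

Fixpoint fiter (f : C -> C) (n : nat) (z : C) : C :=
  match n with O => z | S m => f (fiter f m z) end.

Definition Crit (U : C -> Prop) (f : C -> C) (c : C) : Prop :=
  U c /\ is_derive (K := C_AbsRing) (V := C_NormedModule) f c (RtoC 0).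

Definition Kf (U : C -> Prop) (f : C -> C) (z : C) : Prop :=
  forall n, U (fiter f n z).

Definition preimV (U V : C -> Prop) (f : C -> C) (n : nat) (z : C) : Prop :=
  (forall i, (i < n)%nat -> U (fiter f i z)) /\ V (fiter f n z).

Definition Piece (U V : C -> Prop) (f : C -> C) (n : nat) (x : C) : C -> Prop :=
  component (preimV U V f n) x.

Definition acc (U V : C -> Prop) (f : C -> C) (x y : C) : Prop :=
  forall n, exists j, (1 <= j)%nat /\ Piece U V f n y (fiter f j x).

Definition crit_sim (U V : C -> Prop) (f : C -> C) (c1 c2 : C) : Prop :=
  c1 = c2 \/ (acc U V f c1 c2 /\ acc U V f c2 c1).

Definition cls (U V : C -> Prop) (f : C -> C) (c : C) : C -> Prop :=
  fun c' => Crit U f c' /\ crit_sim U V f c c'.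

Definition inD (U V : C -> Prop) (f : C -> C) (S : C -> Prop) : Prop :=
  exists c, Crit U f c /\ S = cls U V f c.

Definition accD (U V : C -> Prop) (f : C -> C) (S T : C -> Prop) : Prop :=
  exists c1 c2, S c1 /\ T c2 /\ acc U V f c1 c2.

Definition leD (U V : C -> Prop) (f : C -> C) (S T : C -> Prop) : Prop :=
  S = T \/ accD U V f T S.

Definition D0 (U V : C -> Prop) (f : C -> C) (S : C -> Prop) : Prop :=
  inD U V f S /\
  forall T, inD U V f T -> T <> S -> ~ accD U V f S T.

(* Dlayers k = (D_k(f), D_0(f) u ... u D_k(f)) *)
Fixpoint Dlayers (U V : C -> Prop) (f : C -> C) (k : nat)
  : ((C -> Prop) -> Prop) * ((C -> Prop) -> Prop) :=
  match k with
  | O => (D0 U V f, D0 U V f)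
  | S k' =>
      let Uk := snd (Dlayers U V f k') in
      let Dn := fun S => inD U V f S /\ ~ Uk S /\
                  forall T, inD U V f T -> ~ Uk T -> leD U V f T S -> T = S in
      (Dn, fun S => Uk S \/ Dn S)
  end.

Definition Dk (U V : C -> Prop) (f : C -> C) (k : nat) : (C -> Prop) -> Prop :=
  fst (Dlayers U V f k).

(* Accumulation between classes is transitive, because f^j maps a puzzle piece
   of depth n + j containing y onto a connected set inside a depth-n piece
   containing f^j y.  Now let [c] lie in D_k with k >= 1.  It is not in D_0, so
   it accumulates to some other class T.  If T lies in D_0 u ... u D_(k-1), then
   by induction T accumulates to a class of D_0, and so does [c] by
   transitivity; otherwise T <= [c] and T is not in an earlier layer, so the
   minimality of [c] forces T = [c], a contradiction. *)
From Stdlib Require Import Reals List Classical Lia.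
From Coquelicot Require Import Coquelicot.
Open Scope R_scope.

Lemma fiter_add f a b z : fiter f (a + b) z = fiter f a (fiter f b z).
Proof. induction a; simpl; congruence. Qed.

Lemma connected_union A B p : connected A -> connected B -> A p -> B p ->
  connected (fun z => A z \/ B z).
Proof.
  intros hA hB Ap Bp O1 O2 o1 o2 cov [z1 [s1 h1]] [z2 [s2 h2]].
  assert (cA : forall z, A z -> O1 z \/ O2 z) by (intros; apply cov; auto).
  assert (cB : forall z, B z -> O1 z \/ O2 z) by (intros; apply cov; auto).
  (* the common point p lies in O1 or O2, and links z1 or z2 inside A or B *)
  destruct (cov p (or_introl Ap)) as [Hp|Hp].
  - destruct s2 as [s2|s2].
    + destruct (hA O1 O2 o1 o2 cA (ex_intro _ p (conj Ap Hp))
                  (ex_intro _ z2 (conj s2 h2))) as [z [? ?]].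
      exists z; auto.
    + destruct (hB O1 O2 o1 o2 cB (ex_intro _ p (conj Bp Hp))
                  (ex_intro _ z2 (conj s2 h2))) as [z [? ?]].
      exists z; auto.
  - destruct s1 as [s1|s1].
    + destruct (hA O1 O2 o1 o2 cA (ex_intro _ z1 (conj s1 h1))
                  (ex_intro _ p (conj Ap Hp))) as [z [? ?]].
      exists z; auto.
    + destruct (hB O1 O2 o1 o2 cB (ex_intro _ z1 (conj s1 h1))
                  (ex_intro _ p (conj Bp Hp))) as [z [? ?]].
      exists z; auto.
Qed.

Lemma connected_image S (g : C -> C) :
  connected S -> (forall s, S s -> @continuous C_UniformSpace C_UniformSpace g s) ->
  connected (fun w => exists s, S s /\ g s = w).
Proof.
  intros hS hg O1 O2 o1 o2 cov [w1 [[s1 [S1 e1]] h1]] [w2 [[s2 [S2 e2]] h2]].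
  set (W1 := fun w : C => @locally C_UniformSpace w (fun u => O1 (g u))).
  set (W2 := fun w : C => @locally C_UniformSpace w (fun u => O2 (g u))).
  assert (inW1 : forall s, S s -> O1 (g s) -> W1 s).
  { intros s Ss Os. apply (hg s Ss). apply o1. exact Os. }
  assert (inW2 : forall s, S s -> O2 (g s) -> W2 s).
  { intros s Ss Os. apply (hg s Ss). apply o2. exact Os. }
  destruct (hS W1 W2) as [z [Sz [Hz1 Hz2]]].
  - intros x Hx. apply locally_locally. exact Hx.
  - intros x Hx. apply locally_locally. exact Hx.
  - intros z Sz. destruct (cov (g z)) as [H|H];
      [exists z; auto | left; auto | right; auto].
  - exists s1. subst. auto.
  - exists s2. subst. auto.
  - exists (g z). split; [exists z; auto|].
    split; [apply (locally_singleton _ _ Hz1) | apply (locally_singleton _ _ Hz2)].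
Qed.

Lemma component_trans A x y z :
  component A x y -> component A y z -> component A x z.
Proof.
  intros [S [SA [Sc [Sx Sy]]]] [S' [S'A [S'c [S'y S'z]]]].
  exists (fun w => S w \/ S' w). split; [|split; [|split]].
  - intros w [Hw|Hw]; auto.
  - apply (connected_union S S' y); auto.
  - left; exact Sx.
  - right; exact S'z.
Qed.

Lemma proper_holomorphic_continuous U V f z : proper_holomorphic U V f -> U z ->
  @continuous C_UniformSpace C_UniformSpace f z.
Proof.
  intros [_ [hd _]] Uz P HP. apply locally_C.
  apply (ex_derive_continuous (K := C_AbsRing) (V := C_NormedModule) f z (hd z Uz)).
  exact HP.
Qed.

Section Accumulation.

Variables (U V : C -> Prop) (f : C -> C).
Hypothesis f_continuous : forall z, U z -> @continuous C_UniformSpace C_UniformSpace f z.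

Lemma continuous_fiter j w : (forall i, (i < j)%nat -> U (fiter f i w)) ->
  @continuous C_UniformSpace C_UniformSpace (fiter f j) w.
Proof.
  induction j as [|j IH]; intros H; simpl.
  - apply (continuous_id (U := C_UniformSpace)).
  - apply (continuous_comp (U := C_UniformSpace) (V := C_UniformSpace)
             (W := C_UniformSpace) (fiter f j) f).
    + apply IH. intros i Hi; apply H; lia.
    + apply f_continuous, H; lia.
Qed.

Lemma preimV_fiter n j w : preimV U V f (n + j) w -> preimV U V f n (fiter f j w).
Proof.
  intros [H1 H2]; split.
  - intros i Hi. rewrite <- fiter_add. apply H1. lia.
  - rewrite <- fiter_add. exact H2.
Qed.

Lemma Piece_fiter n j y w :
  Piece U V f (n + j) y w -> Piece U V f n (fiter f j y) (fiter f j w).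
Proof.
  intros [S [Ssub [Sc [Sy Sw]]]].
  exists (fun v => exists s, S s /\ fiter f j s = v). split; [|split; [|split]].
  - intros v [s [Ss <-]]. apply preimV_fiter, Ssub, Ss.
  - apply connected_image; auto. intros s Ss. apply continuous_fiter.
    intros i Hi. apply (proj1 (Ssub s Ss)). lia.
  - exists y; auto.
  - exists w; auto.
Qed.

Lemma acc_trans x y z : acc U V f x y -> acc U V f y z -> acc U V f x z.
Proof.
  intros Hxy Hyz n.
  destruct (Hyz n) as [j [Hj Hzy]].
  destruct (Hxy (n + j)%nat) as [i [Hi Hyx]].
  exists (j + i)%nat. split; [lia|].
  rewrite fiter_add. eapply component_trans; [exact Hzy|].
  apply Piece_fiter, Hyx.
Qed.

Lemma accD_trans S T T' :
  inD U V f T -> accD U V f S T -> accD U V f T T' -> accD U V f S T'.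
Proof.
  intros [c [_ ->]] [c1 [c2 [S1 [[_ s2] A12]]]] [c3 [c4 [[_ s3] [T4 A34]]]].
  exists c1, c4. split; [exact S1|]. split; [exact T4|].
  (* both c2 and c3 are equivalent to the representative c *)
  assert (A1c : acc U V f c1 c).
  { destruct s2 as [<-|[_ h]]; [exact A12 | eapply acc_trans; eauto]. }
  assert (A13 : acc U V f c1 c3).
  { destruct s3 as [<-|[h _]]; [exact A1c | eapply acc_trans; eauto]. }
  eapply acc_trans; eauto.
Qed.

Definition Dupto (k : nat) : (C -> Prop) -> Prop := snd (Dlayers U V f k).

Lemma D0_Dupto k S : D0 U V f S -> Dupto k S.
Proof. unfold Dupto; induction k; simpl; auto. Qed.

Lemma not_D0_accD S : inD U V f S -> ~ D0 U V f S ->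
  exists T, inD U V f T /\ T <> S /\ accD U V f S T.
Proof.
  intros iS nD0. apply NNPP. intro N. apply nD0. split; [exact iS|].
  intros T iT nT aT. apply N. exists T; auto.
Qed.

Lemma Dupto_accD_D0 k S : Dupto k S ->
  D0 U V f S \/ exists T, D0 U V f T /\ accD U V f S T.
Proof.
  revert S. induction k as [|k IH]; intros S HS; [left; exact HS|].
  destruct HS as [HS|[iS [nU minS]]]; [apply IH, HS|].
  destruct (classic (D0 U V f S)) as [H0|H0]; [left; exact H0|right].
  destruct (not_D0_accD S iS H0) as [T [iT [nT aT]]].
  destruct (classic (Dupto k T)) as [UT|UT].
  - destruct (IH T UT) as [D|[T' [D a]]]; [exists T; auto|].
    exists T'. split; [exact D | eapply accD_trans; eauto].
  - exfalso. apply nT, minS; [exact iT | exact UT | right; exact aT].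
Qed.

End Accumulation.

Theorem corollary7p2 (U V : C -> Prop) (f : C -> C)
  (hV : setup_V V) (hU : setup_U U V) (hf : proper_holomorphic U V f)
  (hcrit : forall c, Crit U f c -> Kf U f c)
  (hcomp : forall x c1 c2, Crit U f c1 -> Crit U f c2 ->
     component V x c1 -> component V x c2 ->
     component (Kf U f) c1 c2) :
  forall (k : nat), (1 <= k)%nat ->
  forall S, Dk U V f k S -> exists T, D0 U V f T /\ accD U V f S T.
Proof.
  intros [|k] Hk S HS; [lia|].
  pose proof (fun z => proper_holomorphic_continuous U V f z hf) as f_cont.
  destruct (Dupto_accD_D0 U V f f_cont (Datatypes.S k) S) as [D|Hacc]; [right; exact HS| |exact Hacc].
  destruct HS as [_ [nU _]]. contradiction (nU (D0_Dupto U V f k S D)).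
Qed.
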